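(* A Toeplitz graph is regular if and only if it is a circulant graph. More precisely, for a Toeplitz graph $G=G_n\langle t_1,\ldots,t_k\rangle$: if $G$ is regular then its adjacency matrix (vertices ordered $1,\ldots,n$) is a circulant matrix; and if $G$ is isomorphic to a circulant graph then $G$ is regular.
   Context: For integers $n\ge 2$, $k\ge 1$ and $1\le t_1<t_2<\cdots<t_k\le n-1$, the Toeplitz graph $G_n\langle t_1,\ldots,t_k\rangle$ is the simple graph with vertex set $[n]=\{1,\ldots,n\}$ in which two distinct vertices $i,j$ are adjacent if and only if $|i-j|\in\{t_1,\ldots,t_k\}$. An $n\times n$ matrix $(a_{ij})$ is circulant if $a_{ij}$ depends only on $(i-j)\bmod n$. A circulant graph is a graph isomorphic to a graph whose adjacency matrix is a symmetric $(0,1)$ circulant matrix with zero diagonal. A graph is regular if all vertices have the same degree. *)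

From mathcomp Require Import all_boot all_algebra.
Set Implicit Arguments. Unset Strict Implicit. Unset Printing Implicit Defensive.

(* Vertices 1..n of the paper are represented by 'I_n = {0,..,n-1}
   (shift by one; differences |i-j| are unchanged). *)

Definition absdiff (i j : nat) : nat := maxn i j - minn i j.

Definition toeplitz (n : nat) (ts : seq nat) : rel 'I_n :=
  fun i j => (i != j) && (absdiff i j \in ts).

Definition deg (T : finType) (e : rel T) (x : T) : nat := #|[pred y | e x y]|.
Definition regular (T : finType) (e : rel T) : Prop :=
  exists d, forall x, deg e x = d.

Definition adj_mx (n : nat) (e : rel 'I_n) : 'M[nat]_n :=
  \matrix_(i, j) (e i j : nat).

Definition circulant_mx (R : Type) (n : nat) (A : 'M[R]_n) : Prop :=
  forall i j i' j' : 'I_n,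
    (i + n - j) %% n = (i' + n - j') %% n -> A i j = A i' j'.

Definition circulant_graph (T : finType) (e : rel T) : Prop :=
  exists (m : nat) (C : 'M[nat]_m) (f : T -> 'I_m),
    bijective f /\
    (forall i j, C i j = C j i) /\
    (forall i j, C i j = 0 \/ C i j = 1) /\
    (forall i, C i i = 0) /\
    circulant_mx C /\
    (forall x y, e x y = (C (f x) (f y) == 1)).
Arguments toeplitz : clear implicits.

From mathcomp Require Import all_boot all_algebra.
From mathcomp Require Import zify.

(* Vertex i of G_n<ts> has one neighbour below it for each t in ts with
   t <= i and one above it for each t in ts with t <= n-1-i.  Equating the
   degrees of the consecutive vertices s-1 and s therefore gives
   [s \in ts] = [n-s \in ts], i.e. the distance set is closed under
   t |-> n-t; then adjacency of i and j depends only on (i - j) mod n, which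
   is circulance.  Conversely all rows of a circulant matrix are cyclic
   shifts of each other, so they contain the same number of ones. *)

Definition dist_count (ts : seq nat) (x : nat) : nat :=
  \sum_(0 <= d < x) (d.+1 \in ts : nat).

Lemma dist_countS ts x : dist_count ts x.+1 = dist_count ts x + (x.+1 \in ts).
Proof. by rewrite /dist_count big_nat_recr. Qed.

Lemma deg_toeplitz n ts (i : 'I_n) :
  deg (toeplitz n ts) i = dist_count ts i + dist_count ts (n - i.+1).
Proof.
have hi := ltn_ord i.
rewrite /deg -sum1_card big_mkcond /=.
have -> : \sum_(y : 'I_n) (if toeplitz n ts i y then 1 else 0)
        = \sum_(0 <= y < n) ((i != y :> nat) && (absdiff i y \in ts) : nat).
  by rewrite big_mkord; apply: eq_bigr => y _; rewrite /toeplitz; case: ifP.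
rewrite (big_cat_nat _ (n := i)) //=; last by lia.
rewrite [X in _ + X]big_ltn // eqxx add0n.
congr (_ + _).
  rewrite big_nat_rev; apply: eq_big_nat => y /andP[_ hy].
  have -> : absdiff i (0 + i - y.+1) = y.+1 by rewrite /absdiff; lia.
  by have -> : (i != 0 + i - y.+1 :> nat) by apply/eqP; lia.
rewrite -{1}(add0n i.+1) big_addn; apply: eq_big_nat => y _.
have -> : absdiff i (y + i.+1) = y.+1 by rewrite /absdiff; lia.
by have -> : (i != y + i.+1 :> nat) by apply/eqP; lia.
Qed.

Lemma regular_toeplitz_mem_compl n ts s :
  regular (toeplitz n ts) -> 0 < s < n -> (s \in ts) = (n - s \in ts).
Proof.
case=> d deg_d /andP[]; case: s => [//|k] _ k_lt_n.
have := deg_d (Ordinal k_lt_n); rewrite -(deg_d (Ordinal (ltnW k_lt_n))).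
rewrite !deg_toeplitz /=.
have -> : n - k.+1 = (n - k.+2).+1 by lia.
by rewrite !dist_countS; case: (_ \in ts); case: (_ \in ts) => /=; lia.
Qed.

Lemma toeplitzE_mod n ts (i j : 'I_n) :
  (forall s, 0 < s < n -> (s \in ts) = (n - s \in ts)) ->
  toeplitz n ts i j = ((i + n - j) %% n != 0) && ((i + n - j) %% n \in ts).
Proof.
move=> ts_compl; have hi := ltn_ord i; have hj := ltn_ord j.
rewrite /toeplitz; case: (ltngtP i j) => hij.
- have -> : (i + n - j) %% n = n - (j - i) by rewrite modn_small; lia.
  have -> : (i != j) by apply/eqP => /(congr1 val) /=; lia.
  have -> : absdiff i j = j - i by rewrite /absdiff; lia.
  rewrite (ts_compl (j - i)); last by lia.
  by have -> : n - (j - i) != 0 by lia.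
- have -> : i + n - j = (i - j) + n by lia.
  rewrite modnDr modn_small; last by lia.
  have -> : (i != j) by apply/eqP => /(congr1 val) /=; lia.
  have -> : absdiff i j = i - j by rewrite /absdiff; lia.
  by have -> : (i - j != 0) by lia.
- have -> : i = j by apply: val_inj.
  by rewrite eqxx addKn modnn.
Qed.

Lemma circulant_mx_card_row {R : Type} {m : nat} {A : 'M[R]_m}
    (P : pred R) (a b : 'I_m) :
  circulant_mx A -> #|[pred z | P (A a z)]| = #|[pred z | P (A b z)]|.
Proof.
case: m A a b => [|m] A a b circA; first by case: a.
have modE (u v : 'I_m.+1) : (u + m.+1 - v) %% m.+1 = val (u - v)%R.
  by rewrite /= modnDmr addnBA //; exact: ltnW.
rewrite -!sum1_card (reindex (fun z : 'I_m.+1 => z - (b - a))%R); last first.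
  exists (fun z : 'I_m.+1 => z + (b - a))%R => z _.
    exact: GRing.addrNK.
  exact: GRing.addrK.
apply: eq_bigl => z; rewrite !inE; congr P; apply: circA.
by rewrite !modE GRing.opprB GRing.addrA GRing.subrKC.
Qed.

Lemma circulant_graph_regular (T : finType) (e : rel T) :
  circulant_graph e -> regular e.
Proof.
case: (pickP T) => [x0 _ | T0]; last by exists 0 => x; have := T0 x.
case=> m [C [f [f_bij [_ [_ [_ [circC eE]]]]]]].
have degE y : deg e y = #|[pred z | C (f y) z == 1]|.
  rewrite /deg -!sum1_card (reindex f (onW_bij _ f_bij)).
  by apply: eq_bigl => z; rewrite !inE eE.
exists (deg e x0) => x; rewrite !degE.
exact: (circulant_mx_card_row (fun c => c == 1) (f x) (f x0) circC).
Qed.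

Theorem theorem4p6 (n : nat) (ts : seq nat) :
  2 <= n -> 0 < size ts -> sorted ltn ts ->
  all (fun t => 0 < t < n) ts ->
  (regular (toeplitz n ts) -> circulant_mx (adj_mx (toeplitz n ts))) /\
  (circulant_graph (toeplitz n ts) -> regular (toeplitz n ts)).
Proof.
move=> _ _ _ _; split; last exact: circulant_graph_regular.
move=> reg i j i' j' ij_mod.
have ts_compl s := @regular_toeplitz_mem_compl n ts s reg.
by rewrite !mxE !toeplitzE_mod // ij_mod.
Qed.
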